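(* Let $X_1$ be a connected graph with at least two vertices, $X_2=K_2$ with $V(X_2)=\{1,2\}$, and $X=X_1\square X_2$. Let $\{a,b\}\in E(X_1)$ with $-2\notin\Lambda_{\mathbf f_{ab}}$, let $\varepsilon_1$ be the edge of $X$ joining $(a,1),(b,1)$ and $\varepsilon_2$ the edge joining $(a,2),(b,2)$. Then $\mathbf h_{\varepsilon_1}$ and $\mathbf h_{\varepsilon_2}$ are strongly cospectral with respect to the adjacency matrix $A_{\mathcal L}$ of $\mathcal L(X)$ if and only if $|\vartheta-\vartheta'|\neq2$ for all $\vartheta,\vartheta'\in\Lambda_{\mathbf f_{ab}}$. Moreover, if they are strongly cospectral, then $$\Psi^-_{\mathbf h_{\varepsilon_1},\mathbf h_{\varepsilon_2}}=\Lambda_{\mathbf f_{ab}},\qquad \Psi^+_{\mathbf h_{\varepsilon_1},\mathbf h_{\varepsilon_2}}=\{\vartheta+2:\vartheta\in\Lambda_{\mathbf f_{ab}}\}\cup\{-2\}.$$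
   Context: $X_1\square X_2$ is the Cartesian product (vertex set $V(X_1)\times V(X_2)$, $(x,y)\sim(x',y')$ iff ($x=x'$, $y\sim y'$) or ($y=y'$, $x\sim x'$)). The line graph $\mathcal L(Y)$ has vertex set $E(Y)$, edges adjacent iff they share an endpoint. $\mathbf h_\varepsilon$ is the vertex state in $\mathcal L(X)$ of edge $\varepsilon$; $\mathbf f_{ab}$ the vertex state in $\mathcal L(X_1)$ of $\{a,b\}$, and $\Lambda_{\mathbf f_{ab}}$ its eigenvalue support with respect to the adjacency matrix of $\mathcal L(X_1)$. With $A_{\mathcal L}=\sum_\vartheta\vartheta F_\vartheta$ (orthogonal spectral projections), $\Psi^\pm_{\mathbf h_{\varepsilon_1},\mathbf h_{\varepsilon_2}}=\{\vartheta: F_\vartheta\mathbf h_{\varepsilon_1}=\pm F_\vartheta\mathbf h_{\varepsilon_2}\neq\mathbf 0\}$; strong cospectrality means $F_\vartheta\mathbf h_{\varepsilon_1}=\pm F_\vartheta\mathbf h_{\varepsilon_2}$ for every $\vartheta$. *)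

From HB Require Import structures.
From mathcomp Require Import all_boot all_order all_algebra.
From mathcomp Require Import reals.
From Stdlib Require Import ClassicalEpsilon.
Set Implicit Arguments. Unset Strict Implicit. Unset Printing Implicit Defensive.
Import Order.TTheory GRing.Theory Num.Theory.
Local Open Scope ring_scope.

Definition simple_graph (T : finType) (e : rel T) : Prop := symmetric e /\ irreflexive e.
Definition connected_graph (T : finType) (e : rel T) : Prop := forall x y, connect e x y.

Definition cartprod (T1 T2 : finType) (e1 : rel T1) (e2 : rel T2) : rel (T1 * T2) :=
  fun p q => ((p.1 == q.1) && e2 p.2 q.2) || ((p.2 == q.2) && e1 p.1 q.1).

(* K2 on the vertex set bool; vertex 1 is false, vertex 2 is true. *)
Definition K2 : rel bool := fun i j => i != j.

Definition is_edge (T : finType) (e : rel T) (s : {set T}) : bool :=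
  [exists x, exists y, e x y && (s == [set x; y])].
Definition edge_of (T : finType) (e : rel T) := {s : {set T} | is_edge e s}.

Definition line_rel (T : finType) (e : rel T) : rel (edge_of e) :=
  fun s t => (s != t) && (val s :&: val t != set0).

Definition adjop (R : realType) (T : finType) (e : rel T) (v : T -> R) : T -> R :=
  fun x => \sum_(y | e x y) v y.
Definition dotv (R : realType) (T : finType) (u v : T -> R) : R := \sum_x u x * v x.

Definition vstate (R : realType) (T : finType) (x : T) : T -> R :=
  fun y => if y == x then 1 else 0.

(* w is the orthogonal projection of v onto the theta-eigenspace of A(e). *)
Definition is_eigproj (R : realType) (T : finType) (e : rel T) (theta : R)
    (v w : T -> R) : Prop :=
  (forall x, adjop e w x = theta * w x) /\
  (forall u : T -> R, (forall x, adjop e u x = theta * u x) ->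
     dotv (fun x => v x - w x) u = 0).

(* Spectral projection F_theta v (F_theta = 0 when theta is not an eigenvalue). *)
Definition specproj (R : realType) (T : finType) (e : rel T) (theta : R)
    (v : T -> R) : T -> R :=
  epsilon (inhabits (fun _ => 0)) (is_eigproj e theta v).

Definition eig_support (R : realType) (T : finType) (e : rel T) (v : T -> R)
    (theta : R) : Prop :=
  specproj e theta v <> (fun _ => 0).

Definition strongly_cospectral (R : realType) (T : finType) (e : rel T)
    (u v : T -> R) : Prop :=
  forall theta : R, specproj e theta u = specproj e theta v \/
                    specproj e theta u = (fun x => - specproj e theta v x).

Definition Psi_plus (R : realType) (T : finType) (e : rel T) (u v : T -> R)
    (theta : R) : Prop :=
  specproj e theta u = specproj e theta v /\ specproj e theta u <> (fun _ => 0).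

Definition Psi_minus (R : realType) (T : finType) (e : rel T) (u v : T -> R)
    (theta : R) : Prop :=
  specproj e theta u = (fun x => - specproj e theta v x) /\
  specproj e theta u <> (fun _ => 0).
Arguments line_rel {T} e.

From HB Require Import structures.
From mathcomp Require Import all_boot all_order all_algebra.
From mathcomp Require Import reals ring lra.
From Stdlib Require Import Classical ClassicalEpsilon FunctionalExtensionality.
Set Implicit Arguments. Unset Strict Implicit. Unset Printing Implicit Defensive.
Import Order.TTheory GRing.Theory Num.Theory.
Local Open Scope ring_scope.

(* An edge function on L(X1 □ K2) consists of two layer copies g0, g1 of edge functions on
   L(X1) and a rung value r(v) for each vertex v of X1.  As A(L(X1)) = N^T N - 2 I, with N the
   vertex-edge incidence matrix, a θ-eigenfunction of L(X) has g0 - g1 a θ-eigenfunction of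
   L(X1), and for θ <> -2 it has N^T r = g0 + g1 with g0 + g1 a (θ-2)-eigenfunction.  Hence
   F_θ (h_ε1 - h_ε2) is the antisymmetric lift of F_θ f_ab, F_θ (h_ε1 + h_ε2) is built from
   F_(θ-2) f_ab when θ <> -2, and F_(-2) (h_ε1 + h_ε2) <> 0.  So F_θ h_ε1 = F_θ h_ε2 iff θ is
   not in Λ, and F_θ h_ε1 = - F_θ h_ε2 iff θ <> -2 and θ - 2 is not in Λ; the hypothesis
   -2 ∉ Λ settles θ = 0. *)

Section RealFunctions.
Variables (R : realType) (X : Type).

Lemma fun_subr_eq0 (u w : X -> R) : (fun x => u x - w x) = (fun _ => 0) <-> u = w.
Proof.
split=> [/(congr1 (@^~ _)) uw | ->]; last by apply: functional_extensionality => x; rewrite subrr.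
by apply: functional_extensionality => x; apply/eqP; rewrite -subr_eq0 uw.
Qed.

Lemma fun_addr_eq0 (u w : X -> R) :
  (fun x => u x + w x) = (fun _ => 0) <-> u = (fun x => - w x).
Proof.
split=> [/(congr1 (@^~ _)) uw | ->]; last by apply: functional_extensionality => x; rewrite addNr.
by apply: functional_extensionality => x; apply/eqP; rewrite -addr_eq0 uw.
Qed.

Lemma fun_eq_eq0 (u w : X -> R) : u = w ->
  (u = (fun _ => 0) <-> u = (fun x => - w x)).
Proof.
move=> <-; split=> [-> | /fun_addr_eq0 /(congr1 (@^~ _)) /= uu].
  by apply: functional_extensionality => x; rewrite oppr0.
by apply: functional_extensionality => x; move: (uu x); lra.
Qed.

Lemma fun_eqN_eq0 (u w : X -> R) : u = (fun x => - w x) ->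
  (u = (fun _ => 0) <-> u = w).
Proof.
move=> uw; split=> [u0 | wu]; last by move: uw; rewrite -wu -fun_eq_eq0.
apply/fun_subr_eq0; apply: functional_extensionality => x.
by move/fun_addr_eq0/(congr1 (@^~ x)): uw; rewrite u0 /=; lra.
Qed.

End RealFunctions.

Section SymmetricMatrix.
Variables (F : realFieldType) (n : nat).

Lemma mulmx_trmx_self_eq0 (w : 'rV[F]_n) : (w *m w^T) 0 0 = 0 -> w = 0.
Proof.
rewrite mxE => w0; apply/rowP => j; rewrite mxE.
have sq_ge0 i : predT i -> 0 <= w 0 i * w^T i 0 by rewrite mxE -expr2 sqr_ge0.
move: (psumr_eq0P sq_ge0 w0 (i:=j) isT); rewrite mxE => /eqP.
by rewrite mulf_eq0 orbb => /eqP.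
Qed.

(* A row in both the kernel and the row space of M = M^T is orthogonal to itself. *)
Lemma sym_kermx_cap0 (M : 'M[F]_n) : M^T = M -> (kermx M :&: M)%MS = 0.
Proof.
move=> MT; apply/row_matrixP => i; rewrite row0; apply: mulmx_trmx_self_eq0.
have /submxP [D rowD] : (row i (kermx M :&: M)%MS <= M)%MS.
  exact: submx_trans (row_sub _ _) (capmxSr _ _).
have : (row i (kermx M :&: M)%MS <= kermx M)%MS.
  exact: submx_trans (row_sub _ _) (capmxSl _ _).
by rewrite rowD => /sub_kermxP DMM; rewrite trmx_mul MT mulmxA DMM mul0mx mxE.
Qed.

Lemma sym_ker_range_decomp (M : 'M[F]_n) (v : 'rV[F]_n) : M^T = M ->
  exists a b, v = a *m kermx M + b *m M.
Proof.
move=> MT; have full : row_full (kermx M + M)%MS.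
  rewrite /row_full; move: (mxrank_sum_cap (kermx M) M).
  rewrite sym_kermx_cap0 // mxrank0 addn0 mxrank_ker => ->.
  by rewrite subnK // rank_leq_col.
by have /sub_addsmxP [[a b] /= ->] := submx_full v full; exists a, b.
Qed.

End SymmetricMatrix.

Section SpectralProjection.
Variables (R : realType) (T : finType) (e : rel T).

Lemma dotvC (u w : T -> R) : dotv u w = dotv w u.
Proof. by apply: eq_bigr => x _; rewrite mulrC. Qed.

Lemma dotvDl (u w z : T -> R) : dotv (fun x => u x + w x) z = dotv u z + dotv w z.
Proof. by rewrite /dotv -big_split; apply: eq_bigr => x _; rewrite mulrDl. Qed.

Lemma dotvBl (u w z : T -> R) : dotv (fun x => u x - w x) z = dotv u z - dotv w z.
Proof. by rewrite /dotv -sumrB; apply: eq_bigr => x _; rewrite mulrBl. Qed.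

Lemma dotvDr (u w z : T -> R) : dotv z (fun x => u x + w x) = dotv z u + dotv z w.
Proof. by rewrite dotvC dotvDl !(dotvC z). Qed.

Lemma dotvZl c (u z : T -> R) : dotv (fun x => c * u x) z = c * dotv u z.
Proof. by rewrite /dotv mulr_sumr; apply: eq_bigr => x _; rewrite mulrA. Qed.

Lemma dotvNl (u z : T -> R) : dotv (fun x => - u x) z = - dotv u z.
Proof. by rewrite /dotv -sumrN; apply: eq_bigr => x _; rewrite mulNr. Qed.

Lemma dotv0l (z : T -> R) : dotv (fun _ => 0) z = 0.
Proof. by rewrite /dotv big1 // => x _; rewrite mul0r. Qed.

Lemma dotv_self_eq0 (u : T -> R) : dotv u u = 0 -> u = (fun _ => 0).
Proof.
move=> u0; apply: functional_extensionality => x.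
have sq_ge0 y : predT y -> 0 <= u y * u y by rewrite -expr2 sqr_ge0.
by move: (psumr_eq0P sq_ge0 u0 (i:=x) isT) => /eqP; rewrite mulf_eq0 orbb => /eqP.
Qed.

Lemma adjopD (u w : T -> R) x :
  adjop e (fun y => u y + w y) x = adjop e u x + adjop e w x.
Proof. by rewrite /adjop big_split. Qed.

Lemma adjopB (u w : T -> R) x :
  adjop e (fun y => u y - w y) x = adjop e u x - adjop e w x.
Proof. by rewrite /adjop sumrB. Qed.

Lemma adjopN (u : T -> R) x : adjop e (fun y => - u y) x = - adjop e u x.
Proof. by rewrite /adjop sumrN. Qed.

Lemma adjopZ c (u : T -> R) x : adjop e (fun y => c * u y) x = c * adjop e u x.
Proof. by rewrite /adjop mulr_sumr. Qed.

Definition rowv (u : T -> R) : 'rV[R]_#|T| := \row_i u (enum_val i).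

Definition adjmx : 'M[R]_#|T| := \matrix_(i, j) (e (enum_val i) (enum_val j))%:R.

Lemma sum_enum_val (F : T -> R) : \sum_(i < #|T|) F (enum_val i) = \sum_x F x.
Proof.
rewrite [RHS](reindex (@enum_val T predT)) //.
by exists enum_rank => x _; [exact: enum_valK | exact: enum_rankK].
Qed.

Lemma rowvB (u w : T -> R) : rowv (fun x => u x - w x) = rowv u - rowv w.
Proof. by apply/rowP => j; rewrite !mxE. Qed.

Lemma rowv_eq0 (u : T -> R) : rowv u = 0 -> u = (fun _ => 0).
Proof.
move=> /rowP u0; apply: functional_extensionality => x.
by move: (u0 (enum_rank x)); rewrite !mxE enum_rankK.
Qed.

Lemma dotv_rowv (u w : T -> R) : dotv u w = (rowv u *m (rowv w)^T) 0 0.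
Proof. by rewrite mxE /dotv -sum_enum_val; apply: eq_bigr => i _; rewrite !mxE. Qed.

Hypothesis e_sym : symmetric e.

Lemma adjmx_sym : adjmx^T = adjmx.
Proof. by apply/matrixP => i j; rewrite !mxE e_sym. Qed.

Lemma rowv_adjop (u : T -> R) : rowv (adjop e u) = rowv u *m adjmx.
Proof.
apply/rowP => j; rewrite !mxE /adjop big_mkcond -sum_enum_val.
by apply: eq_bigr => i _; rewrite !mxE e_sym; case: e; rewrite ?mulr1 ?mulr0.
Qed.

Lemma eigenfun_rowv (u : T -> R) th :
  (forall x, adjop e u x = th * u x) <-> rowv u *m (adjmx - th%:M) = 0.
Proof.
have -> : rowv u *m (adjmx - th%:M) = rowv (fun x => adjop e u x - th * u x).
  by rewrite mulmxBr mul_mx_scalar -rowv_adjop; apply/rowP => j; rewrite !mxE.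
split=> [eig | /rowv_eq0 eig x].
  by apply/rowP => j; rewrite !mxE eig subrr.
by apply/eqP; rewrite -subr_eq0; apply/eqP; move: eig => /(congr1 (@^~ x)).
Qed.

Lemma eigproj_exists th (v : T -> R) : exists w, is_eigproj e th v w.
Proof.
set M := adjmx - th%:M; have MT : M^T = M.
  by rewrite /M linearB /= adjmx_sym tr_scalar_mx.
have [a [b vE]] := sym_ker_range_decomp (rowv v) MT.
pose w x : R := (a *m kermx M) 0 (enum_rank x).
have wE : rowv w = a *m kermx M.
  by apply/rowP => j; rewrite mxE /w enum_valK.
exists w; split; first by apply/eigenfun_rowv; rewrite wE -mulmxA mulmx_ker mulmx0.
move=> u /eigenfun_rowv uM.
rewrite dotv_rowv rowvB wE vE addrC addKr.
by rewrite -mulmxA -MT -trmx_mul uM trmx0 mulmx0 mxE.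
Qed.

Lemma eigproj_uniq th (v w1 w2 : T -> R) :
  is_eigproj e th v w1 -> is_eigproj e th v w2 -> w1 = w2.
Proof.
move=> [eig1 orth1] [eig2 orth2].
have eig12 x : adjop e (fun y => w1 y - w2 y) x = th * (w1 x - w2 x).
  by rewrite adjopB eig1 eig2 mulrBr.
have w12E : (fun y => w1 y - w2 y) = (fun y => (v y - w2 y) - (v y - w1 y)).
  by apply: functional_extensionality => y; ring.
have /dotv_self_eq0 w12 : dotv (fun y => w1 y - w2 y) (fun y => w1 y - w2 y) = 0.
  by rewrite {1}w12E dotvBl orth1 // orth2 // subrr.
apply: functional_extensionality => x; apply/eqP; rewrite -subr_eq0.
by move: w12 => /(congr1 (@^~ x)) ->.
Qed.

Lemma specproj_eigproj th (v : T -> R) : is_eigproj e th v (specproj e th v).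
Proof. by apply: epsilon_spec; exact: eigproj_exists. Qed.

Lemma eigproj_specproj th (v w : T -> R) :
  is_eigproj e th v w -> specproj e th v = w.
Proof. exact: eigproj_uniq (specproj_eigproj th v). Qed.

Lemma specprojD th (v1 v2 : T -> R) : specproj e th (fun x => v1 x + v2 x) =
  (fun x => specproj e th v1 x + specproj e th v2 x).
Proof.
have [eig1 orth1] := specproj_eigproj th v1.
have [eig2 orth2] := specproj_eigproj th v2.
apply: eigproj_specproj; split=> [x | u eig_u]; first by rewrite adjopD eig1 eig2 mulrDr.
set r1 := fun x => v1 x - specproj e th v1 x; set r2 := fun x => v2 x - specproj e th v2 x.
have -> : (fun x => v1 x + v2 x - (specproj e th v1 x + specproj e th v2 x)) =
    (fun x => r1 x + r2 x) by apply: functional_extensionality => x; rewrite /r1 /r2; ring.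
by rewrite dotvDl orth1 // orth2 // addr0.
Qed.

Lemma specprojB th (v1 v2 : T -> R) : specproj e th (fun x => v1 x - v2 x) =
  (fun x => specproj e th v1 x - specproj e th v2 x).
Proof.
have := specprojD th (fun x => v1 x - v2 x) v2.
have -> : (fun x => v1 x - v2 x + v2 x) = v1.
  by apply: functional_extensionality => x; rewrite subrK.
by move=> ->; apply: functional_extensionality => x; rewrite addrK.
Qed.

End SpectralProjection.

Section LineGraph.
Variables (R : realType) (T : finType) (e : rel T).

Lemma line_rel_sym : symmetric (line_rel e).
Proof. by move=> s t; rewrite /line_rel eq_sym setIC. Qed.

Definition incident_sum (w : edge_of e -> R) (x : T) : R :=
  \sum_(s : edge_of e | x \in val s) w s.

Definition endpoint_sum (r : T -> R) (s : edge_of e) : R := \sum_(x in val s) r x.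

Lemma incident_sumZ c (w : edge_of e -> R) x :
  incident_sum (fun s => c * w s) x = c * incident_sum w x.
Proof. by rewrite /incident_sum mulr_sumr. Qed.

Lemma endpoint_sumZ c (r : T -> R) s : endpoint_sum (fun x => c * r x) s = c * endpoint_sum r s.
Proof. by rewrite /endpoint_sum mulr_sumr. Qed.

Lemma endpoint_sumN (r : T -> R) s : endpoint_sum (fun x => - r x) s = - endpoint_sum r s.
Proof. by rewrite /endpoint_sum sumrN. Qed.

Lemma endpoint_sum0 s : endpoint_sum (fun _ => 0) s = 0.
Proof. by rewrite /endpoint_sum big1. Qed.

Lemma dotv_endpoint_sum (w : edge_of e -> R) (r : T -> R) :
  dotv w (endpoint_sum r) = dotv (incident_sum w) r.
Proof.
rewrite /dotv /endpoint_sum /incident_sum.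
under eq_bigr => s _ do rewrite mulr_sumr big_mkcond /=.
under [RHS]eq_bigr => x _ do rewrite mulr_suml big_mkcond /=.
rewrite exchange_big /=; apply: eq_bigr => x _; apply: eq_bigr => s _.
by case: (x \in val s).
Qed.

Hypothesis e_irr : irreflexive e.

Lemma card_edge (s : edge_of e) : #|val s| = 2%N.
Proof.
case: s => S /= /existsP [x /existsP [y /andP [exy /eqP ->]]].
by rewrite cards2; case: eqP => // xy; rewrite xy e_irr in exy.
Qed.

Lemma card_edge_meet (s t : edge_of e) : s != t ->
  #|val s :&: val t| = (val s :&: val t != set0) :> nat.
Proof.
move=> st; have le2 : (#|val s :&: val t| <= 2)%N.
  by rewrite -(card_edge s) subset_leq_card // subsetIl.
have ne2 : #|val s :&: val t| != 2%N.
  apply/eqP => st2; move: st; rewrite -(inj_eq val_inj) => /eqP; apply.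
  have /eqP si : val s :&: val t == val s by rewrite eqEcard subsetIl st2 card_edge.
  have /eqP ti : val s :&: val t == val t by rewrite eqEcard subsetIr st2 card_edge.
  by rewrite -{1}si ti.
by rewrite -card_gt0; move: le2 ne2; case: #|_| => [|[|[|]]].
Qed.

Lemma adjop_line (w : edge_of e -> R) (s : edge_of e) :
  adjop (line_rel e) w s = endpoint_sum (incident_sum w) s - 2 * w s.
Proof.
have -> : endpoint_sum (incident_sum w) s = \sum_t (#|val s :&: val t|)%:R * w t.
  rewrite /endpoint_sum /incident_sum.
  under eq_bigr => x _ do rewrite big_mkcond /=.
  rewrite exchange_big /=; apply: eq_bigr => t _.
  rewrite -big_mkcondr /= (eq_bigl (mem (val s :&: val t))) => [|x]; last by rewrite !inE.
  by rewrite sumr_const mulr_natl.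
rewrite (bigD1 s) //= setIid card_edge /adjop addrAC subrr add0r.
rewrite big_mkcond [RHS]big_mkcond /=; apply: eq_bigr => t _.
rewrite /line_rel eq_sym; case: eqP => [-> | /eqP st] //=.
by rewrite card_edge_meet 1?eq_sym //; case: ifP; rewrite ?mul1r ?mul0r.
Qed.

End LineGraph.

Section CartesianK2.
Variables (R : realType) (T : finType) (e : rel T).
Hypothesis e_irr : irreflexive e.

Local Notation eX := (cartprod e K2).
Local Notation EX := (edge_of eX).
Local Notation E1 := (edge_of e).

Lemma cartprodK2_irr : irreflexive eX.
Proof. by move=> [x i]; rewrite /cartprod /K2 /= !eqxx e_irr. Qed.

Lemma is_edge_layer i (s : E1) : is_edge eX [set p | (p.2 == i) && (p.1 \in val s)].
Proof.
case: s => S /= /existsP [x /existsP [y /andP [exy /eqP ->]]].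
apply/existsP; exists (x, i); apply/existsP; exists (y, i).
rewrite /cartprod /= exy eqxx orbT /=; apply/eqP/setP => -[p1 p2].
by rewrite !inE /= !xpair_eqE; case: (p2 == i); case: (p1 == x); case: (p1 == y).
Qed.

Lemma is_edge_rung v : is_edge eX [set p | p.1 == v].
Proof.
apply/existsP; exists (v, false); apply/existsP; exists (v, true).
rewrite /cartprod /K2 /= eqxx /=; apply/eqP/setP => -[p1 p2].
by rewrite !inE /= !xpair_eqE; case: p2; case: (p1 == v).
Qed.

Definition layer i (s : E1) : EX := exist (is_edge eX) _ (is_edge_layer i s).

Definition rung v : EX := exist (is_edge eX) _ (is_edge_rung v).

Lemma mem_layer p i s : (p \in val (layer i s)) = (p.2 == i) && (p.1 \in val s).
Proof. by rewrite inE. Qed.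

Lemma mem_rung p v : (p \in val (rung v)) = (p.1 == v).
Proof. by rewrite inE. Qed.

Lemma eq_layer i j s s' : (layer i s == layer j s') = (i == j) && (s == s').
Proof.
apply/eqP/andP => [ij_ss' | [/eqP -> /eqP -> //]].
case: s ij_ss' => S /[dup] /existsP [x /existsP [y /andP [_ /eqP SE]]] sS ij_ss'.
have : (x, i) \in val (layer j s') by rewrite -ij_ss' mem_layer eqxx /= SE !inE eqxx.
rewrite mem_layer => /andP [/eqP ij _]; move: ij_ss'; rewrite -ij => ss'.
split=> //; apply/eqP/val_inj/setP => z.
by move: ss' => /(congr1 (fun t : EX => (z, i) \in val t)); rewrite !mem_layer eqxx.
Qed.

Lemma layer_neq_rung i s v : (layer i s == rung v) = false.
Proof.
apply/negbTE/eqP => /(congr1 (fun t : EX => (v, ~~ i) \in val t)).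
by rewrite mem_layer mem_rung /= eqxx; case: i.
Qed.

Lemma eq_rung v v' : (rung v == rung v') = (v == v').
Proof.
apply/eqP/eqP => [|-> //] /(congr1 (fun t : EX => (v, true) \in val t)).
by rewrite !mem_rung /= eqxx => /esym/eqP.
Qed.

Lemma edge_cartprodK2 (t : EX) : (exists i s, t = layer i s) \/ (exists v, t = rung v).
Proof.
case: t => S /[dup] /existsP [[x1 x2] /existsP [[y1 y2] /andP [exy /eqP SE]]] sS.
case/orP: exy => /andP [/eqP /= xy1 exy].
  right; exists x1; apply: val_inj; rewrite /= {}SE; apply/setP => -[p1 p2].
  rewrite !inE !xpair_eqE /= -xy1; move: exy; rewrite /K2.
  by case: x2; case: y2; case: p2; case: (p1 == x1).
have s1 : is_edge e [set x1; y1].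
  by apply/existsP; exists x1; apply/existsP; exists y1; rewrite exy eqxx.
left; exists x2, (exist (is_edge e) _ s1); apply: val_inj; rewrite /= {}SE; apply/setP => -[p1 p2].
rewrite !inE !xpair_eqE /= -xy1.
by case: (p2 == x2); case: (p1 == x1); case: (p1 == y1).
Qed.

(* Written with indicator sums, so that no choice is needed to tell layers from rungs. *)
Definition glue (g : bool -> E1 -> R) (r : T -> R) (t : EX) : R :=
  \sum_(p : bool * E1 | t == layer p.1 p.2) g p.1 p.2 + \sum_(v | t == rung v) r v.

Lemma glue_layer g r j s : glue g r (layer j s) = g j s.
Proof.
rewrite /glue (big_pred1 (j, s)) => [|[i s'] /=]; last first.
  by rewrite eq_layer xpair_eqE eq_sym [s' == _]eq_sym.
by rewrite big1 ?addr0 // => v; rewrite layer_neq_rung.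
Qed.

Lemma glue_rung g r v : glue g r (rung v) = r v.
Proof.
rewrite /glue (big_pred1 v) => [|w /=]; last by rewrite eq_rung eq_sym.
by rewrite big1 ?add0r // => p; rewrite eq_sym layer_neq_rung.
Qed.

Lemma eq_glue (u : EX -> R) g r : (forall i s, u (layer i s) = g i s) ->
  (forall v, u (rung v) = r v) -> u = glue g r.
Proof.
move=> ug ur; apply: functional_extensionality => t.
by case: (edge_cartprodK2 t) => [[i [s ->]] | [v ->]]; rewrite ?glue_layer ?glue_rung.
Qed.

Lemma glue_decomp (u : EX -> R) :
  u = glue (fun i s => u (layer i s)) (fun v => u (rung v)).
Proof. exact: eq_glue. Qed.

Lemma sum_edge_cartprodK2 (F : EX -> R) :
  \sum_t F t = \sum_i \sum_s F (layer i s) + \sum_v F (rung v).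
Proof.
rewrite {1}(glue_decomp F) big_split /= pair_big /=; congr (_ + _).
  rewrite (exchange_big_dep predT) //=.
  by apply: eq_bigr => p _; rewrite big_pred1_eq.
by rewrite (exchange_big_dep predT) //=; apply: eq_bigr => v _; rewrite big_pred1_eq.
Qed.

Lemma dotv_glue g g' r r' : dotv (glue g r) (glue g' r') =
  dotv (g true) (g' true) + dotv (g false) (g' false) + dotv r r'.
Proof.
rewrite /dotv sum_edge_cartprodK2 big_bool /=.
by congr (_ + _ + _); apply: eq_bigr => ? _; rewrite ?glue_layer ?glue_rung.
Qed.

Lemma incident_sum_glue g r x i :
  incident_sum (glue g r) (x, i) = incident_sum (g i) x + r x.
Proof.
rewrite /incident_sum big_mkcond sum_edge_cartprodK2 /=.
under eq_bigr => j _ do under eq_bigr => s _ do rewrite mem_layer glue_layer /=.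
under [X in _ + X]eq_bigr => v _ do rewrite mem_rung glue_rung /=.
rewrite -big_mkcond (big_pred1 x) => [|w /=]; last by rewrite eq_sym.
congr (_ + _); rewrite (bigD1 i) //= eqxx /= -big_mkcond [X in _ + X]big1 ?addr0 // => j ji.
by rewrite eq_sym (negbTE ji) big1.
Qed.

Lemma sum_prod_bool (F : T * bool -> R) : \sum_p F p = \sum_x \sum_j F (x, j).
Proof. by rewrite pair_bigA; apply: eq_bigr => -[]. Qed.

Lemma endpoint_sum_layer (phi : T * bool -> R) i s :
  endpoint_sum phi (layer i s) = endpoint_sum (fun x => phi (x, i)) s.
Proof.
rewrite /endpoint_sum big_mkcond sum_prod_bool /= [RHS]big_mkcond; apply: eq_bigr => x _.
rewrite (bigD1 i) //= big1 ?addr0 => [|j /negbTE ji]; last by rewrite inE /= ji.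
by rewrite inE /= eqxx.
Qed.

Lemma endpoint_sum_rung (phi : T * bool -> R) v :
  endpoint_sum phi (rung v) = phi (v, true) + phi (v, false).
Proof.
rewrite /endpoint_sum big_mkcond sum_prod_bool /= (bigD1 v) //= [X in _ + X]big1 ?addr0.
  by rewrite big_bool !inE /= eqxx.
by move=> x /negbTE xv; rewrite big1 // => j _; rewrite inE /= xv.
Qed.

Lemma adjop_glue_layer g r i s : adjop (line_rel eX) (glue g r) (layer i s) =
  adjop (line_rel e) (g i) s + endpoint_sum r s.
Proof.
rewrite (adjop_line cartprodK2_irr) (adjop_line e_irr) endpoint_sum_layer glue_layer.
rewrite /endpoint_sum; under eq_bigr => x _ do rewrite incident_sum_glue.
by rewrite big_split /=; ring.
Qed.

Lemma adjop_glue_rung g r v : adjop (line_rel eX) (glue g r) (rung v) =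
  incident_sum (g true) v + incident_sum (g false) v.
Proof.
by rewrite (adjop_line cartprodK2_irr) endpoint_sum_rung glue_rung !incident_sum_glue; ring.
Qed.

Lemma glue_eigen g r l :
  (forall t, adjop (line_rel eX) (glue g r) t = l * glue g r t) <->
  (forall i s, adjop (line_rel e) (g i) s + endpoint_sum r s = l * g i s) /\
  (forall v, incident_sum (g true) v + incident_sum (g false) v = l * r v).
Proof.
split=> [eig | [eig_layer eig_rung] t].
  split=> [i s | v].
    by rewrite -(adjop_glue_layer g r) eig glue_layer.
  by rewrite -(adjop_glue_rung g r) eig glue_rung.
case: (edge_cartprodK2 t) => [[i [s ->]] | [v ->]].
  by rewrite adjop_glue_layer glue_layer.
by rewrite adjop_glue_rung glue_rung.
Qed.

Lemma glue_eigen_diff g r l :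
  (forall t, adjop (line_rel eX) (glue g r) t = l * glue g r t) ->
  forall s, adjop (line_rel e) (fun s => g false s - g true s) s =
            l * (g false s - g true s).
Proof.
move=> /glue_eigen [eig_layer _] s; rewrite adjopB.
by have := eig_layer false s; have := eig_layer true s; lra.
Qed.

Lemma glue_eigen_sum g r l : l != -2 ->
  (forall t, adjop (line_rel eX) (glue g r) t = l * glue g r t) ->
  endpoint_sum r = (fun s => g false s + g true s) /\
  forall s, adjop (line_rel e) (fun s => g false s + g true s) s =
            (l - 2) * (g false s + g true s).
Proof.
move=> l_neq /glue_eigen [eig_layer eig_rung].
have l2 : l + 2 != 0 by rewrite addr_eq0.
have rE s : endpoint_sum r s = g false s + g true s.
  have := eig_layer false s; have := eig_layer true s; rewrite !(adjop_line e_irr).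
  have : endpoint_sum (incident_sum (g true)) s +
         endpoint_sum (incident_sum (g false)) s = l * endpoint_sum r s.
    by rewrite /endpoint_sum -big_split mulr_sumr; apply: eq_bigr => x _; exact: eig_rung.
  by move=> CB e1 e0; apply: (mulfI l2); lra.
split; first exact: functional_extensionality.
move=> s; rewrite adjopD.
by have := eig_layer false s; have := eig_layer true s; have := rE s; lra.
Qed.

Definition layer_fun j (g : E1 -> R) : EX -> R :=
  glue (fun i s => if i == j then g s else 0) (fun _ => 0).

Lemma layer_fun_diff (g : E1 -> R) :
  (fun t => layer_fun false g t - layer_fun true g t) =
  glue (fun i s => if i then - g s else g s) (fun _ => 0).
Proof.
by apply: eq_glue => [[] s | v]; rewrite /layer_fun ?glue_layer ?glue_rung /= ?subrr ?sub0r ?subr0.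
Qed.

Lemma layer_fun_sum (g : E1 -> R) :
  (fun t => layer_fun false g t + layer_fun true g t) = glue (fun _ s => g s) (fun _ => 0).
Proof.
by apply: eq_glue => [[] s | v]; rewrite /layer_fun ?glue_layer ?glue_rung /= ?add0r ?addr0.
Qed.

Lemma layer_fun_diff_eq0 g :
  (fun t => layer_fun false g t - layer_fun true g t) = (fun _ => 0) <-> g = (fun _ => 0).
Proof.
rewrite layer_fun_diff; split=> [/(congr1 (@^~ (layer false _))) g0 | ->].
  by apply: functional_extensionality => s; rewrite -[RHS](g0 s) glue_layer.
by apply: esym; apply: eq_glue => [[] s | v] /=; rewrite ?oppr0.
Qed.

Lemma layer_set2 i (s : E1) a b :
  val s = [set a; b] -> val (layer i s) = [set (a, i); (b, i)].
Proof.
move=> sE; apply/setP => -[x j]; rewrite mem_layer sE !inE !xpair_eqE /=.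
by case: (j == i); case: (x == a); case: (x == b).
Qed.

Lemma vstate_layer j (s : E1) : vstate R (layer j s) = layer_fun j (vstate R s).
Proof.
apply: eq_glue => [i s' | v]; rewrite /vstate; first by rewrite eq_layer; case: (i == j).
by rewrite eq_sym layer_neq_rung.
Qed.

End CartesianK2.

Section LayerProjections.
Variables (R : realType) (T : finType) (e : rel T) (f : edge_of e -> R).
Hypothesis e_irr : irreflexive e.

Local Notation eX := (cartprod e K2).
Local Notation LX := (line_rel eX).
Local Notation L1 := (line_rel e).
Local Notation Q th := (specproj L1 th f).

Lemma specproj_layer_diff th :
  specproj LX th (fun t => layer_fun false f t - layer_fun true f t) =
  (fun t => layer_fun false (Q th) t - layer_fun true (Q th) t).
Proof.
rewrite !layer_fun_diff; apply: eigproj_specproj; first exact: line_rel_sym.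
have [eigQ orthQ] := specproj_eigproj (@line_rel_sym _ e) th f.
split=> [|u /[dup] eig_u].
  apply/glue_eigen => //; split=> [i s | v].
    by rewrite endpoint_sum0 addr0; case: i => /=; rewrite ?adjopN eigQ ?mulrN.
  by rewrite /incident_sum -big_split big1 ?mulr0 // => s _; exact: addNr.
rewrite {1 2}(glue_decomp u) => /(glue_eigen_diff e_irr) /orthQ orth_u.
have -> : (fun t => glue (fun i s => if i then - f s else f s) (fun _ => 0) t -
    glue (fun i s => if i then - Q th s else Q th s) (fun _ => 0) t) =
  glue (fun i s => if i then - (f s - Q th s) else f s - Q th s) (fun _ => 0).
  by apply: eq_glue => [[] s | v]; rewrite ?glue_layer ?glue_rung /=; ring.
rewrite [in dotv _ u](glue_decomp u) dotv_glue /= dotvNl dotv0l addr0.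
move: orth_u; rewrite dotvC dotvBl !(dotvC _ (fun s => f s - Q th s)); lra.
Qed.

Lemma specproj_layer_sum l : l != -2 ->
  specproj LX l (fun t => layer_fun false f t + layer_fun true f t) =
  glue (fun _ s => l / (l + 2) * Q (l - 2) s)
       (fun v => 2 / (l + 2) * incident_sum (Q (l - 2)) v).
Proof.
move=> l_neq; have l2 : l + 2 != 0 by rewrite addr_eq0.
rewrite layer_fun_sum; apply: eigproj_specproj; first exact: line_rel_sym.
have [eigQ orthQ] := specproj_eigproj (@line_rel_sym _ e) (l - 2) f.
have BQ s : endpoint_sum (incident_sum (Q (l - 2))) s = l * Q (l - 2) s.
  by move: (eigQ s); rewrite (adjop_line e_irr); lra.
split=> [|u /[dup] eig_u].
  apply/glue_eigen => //; split=> [i s | v].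
    by rewrite adjopZ eigQ endpoint_sumZ BQ; field.
  by rewrite !incident_sumZ; field.
rewrite {1 2}(glue_decomp u) => /(glue_eigen_sum e_irr l_neq) [rE /orthQ orth_u].
have -> : (fun t => glue (fun _ s => f s) (fun _ => 0) t -
    glue (fun _ s => l / (l + 2) * Q (l - 2) s)
         (fun v => 2 / (l + 2) * incident_sum (Q (l - 2)) v) t) =
  glue (fun _ s => f s - l / (l + 2) * Q (l - 2) s)
       (fun v => - (2 / (l + 2) * incident_sum (Q (l - 2)) v)).
  by apply: eq_glue => [i s | v]; rewrite ?glue_layer ?glue_rung /=; ring.
rewrite [in dotv _ u](glue_decomp u) dotv_glue /= dotvNl dotvZl -dotv_endpoint_sum rE.
have cd : 2 / (l + 2) = 1 - l / (l + 2) by field.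
move: orth_u; rewrite cd !dotvDr !dotvBl !dotvZl; lra.
Qed.

(* Witness: the (-2)-eigenfunction equal to f on both layers and to -N f on the rungs,
   which is not orthogonal to the sum of the two layer copies of f. *)
Lemma specproj_layer_sum_m2 : f <> (fun _ => 0) ->
  specproj LX (-2) (fun t => layer_fun false f t + layer_fun true f t) <> (fun _ => 0).
Proof.
move=> f_neq0 F0.
have [_] := specproj_eigproj (@line_rel_sym _ eX) (-2)
  (fun t => layer_fun false f t + layer_fun true f t).
rewrite F0 => orth.
have eig_w : forall t, adjop LX (glue (fun _ s => f s) (fun v => - incident_sum f v)) t =
    -2 * glue (fun _ s => f s) (fun v => - incident_sum f v) t.
  apply/glue_eigen => //; split=> [i s | v] /=; last by ring.
  by rewrite (adjop_line e_irr) endpoint_sumN; ring.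
move: (orth _ eig_w).
have -> : (fun t => layer_fun false f t + layer_fun true f t - 0) =
    glue (fun _ s => f s) (fun _ => 0).
  by rewrite -layer_fun_sum; apply: functional_extensionality => t; rewrite subr0.
by rewrite dotv_glue dotv0l addr0 => ff; apply/f_neq0/dotv_self_eq0; lra.
Qed.

Local Notation h j := (layer_fun j f).
Local Notation P j th := (specproj LX th (h j)).

Lemma specproj_layers_eq th : P false th = P true th <-> Q th = (fun _ => 0).
Proof.
rewrite -fun_subr_eq0 -specprojB; last exact: line_rel_sym.
by rewrite specproj_layer_diff layer_fun_diff_eq0.
Qed.

Hypothesis f_neq0 : f <> (fun _ => 0).
Hypothesis Q_m2 : Q (-2) = (fun _ => 0).

Lemma specproj_layers_eqN l :
  P false l = (fun t => - P true l t) <-> l != -2 /\ Q (l - 2) = (fun _ => 0).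
Proof.
rewrite -fun_addr_eq0 -specprojD; last exact: line_rel_sym.
have [-> | l_neq] := eqVneq l (-2).
  by split=> [sum0 | [] //]; case: (specproj_layer_sum_m2 f_neq0).
rewrite specproj_layer_sum //; split=> [sum0 | [_ ->]]; last first.
  apply: esym; apply: eq_glue => [i s | v]; first by rewrite mulr0.
  by rewrite /incident_sum big1 ?mulr0.
split=> //; have [-> | l0] := eqVneq l 0; first by rewrite sub0r.
have l2 : l + 2 != 0 by rewrite addr_eq0.
apply: functional_extensionality => s; move/(congr1 (@^~ (layer false s))): sum0.
by rewrite glue_layer => /eqP; rewrite !mulf_eq0 invr_eq0 (negbTE l0) (negbTE l2) => /eqP.
Qed.

Local Notation supp th := (eig_support L1 f th).

Lemma strongly_cospectral_layers : strongly_cospectral LX (h false) (h true) <->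
  (forall th th', supp th -> supp th' -> `|th - th'| != 2).
Proof.
split=> [sc th th' s s' | sep l].
  have no_gap2 x : supp x -> supp (x - 2) -> False.
    by move=> sx sx2; case: (sc x) => [/specproj_layers_eq | /specproj_layers_eqN []].
  apply/negP; rewrite eqr_norml => /andP [/orP [] /eqP d _].
    by apply: (no_gap2 th) => //; have -> : th - 2 = th' by lra.
  by apply: (no_gap2 th') => //; have -> : th' - 2 = th by lra.
have [Q0 | sl] := classic (Q l = (fun _ => 0)); first by left; exact/specproj_layers_eq.
right; apply/specproj_layers_eqN; split.
  by apply/eqP => lm2; apply: sl; rewrite lm2.
apply: NNPP => sl2; move/negP: (sep l (l - 2) sl sl2); apply.
by rewrite opprB addrC subrK ger0_norm.
Qed.

Lemma Psi_minus_layers th : strongly_cospectral LX (h false) (h true) ->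
  Psi_minus LX (h false) (h true) th <-> supp th.
Proof.
move=> sc; split=> [[Y nz] Q0 | s]; first exact/nz/(fun_eqN_eq0 Y)/specproj_layers_eq.
have nZ : P false th <> P true th by move/specproj_layers_eq.
have Y : P false th = (fun t => - P true th t) by case: (sc th).
by split=> // /(fun_eqN_eq0 Y).
Qed.

Lemma Psi_plus_layers l : strongly_cospectral LX (h false) (h true) ->
  Psi_plus LX (h false) (h true) l <-> (exists th0, supp th0 /\ l = th0 + 2) \/ l = -2.
Proof.
move=> sc; have notY : P false l <> (fun t => - P true l t) <->
    (exists th0, supp th0 /\ l = th0 + 2) \/ l = -2.
  rewrite specproj_layers_eqN; split=> [nY | [[th0 [s ->]] | ->] []]; last by rewrite eqxx.
    have [-> | l_neq] := eqVneq l (-2); [by right | left].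
    by exists (l - 2); split; [move=> Q0; exact: nY | rewrite subrK].
  by rewrite addrK.
rewrite -notY; split=> [[Z nz] Y | nY]; first exact/nz/(fun_eq_eq0 Z).
have Z : P false l = P true l by case: (sc l).
by split=> // /(fun_eq_eq0 Z).
Qed.

End LayerProjections.

Theorem mainTheorem18 (R : realType) (T : finType) (e : rel T)
  (a b : T) (fab : edge_of e)
  (eps1 eps2 : edge_of (cartprod e K2)) :
  simple_graph e -> connected_graph e -> (1 < #|T|)%N ->
  e a b -> val fab = [set a; b] ->
  val eps1 = [set (a, false); (b, false)] ->
  val eps2 = [set (a, true); (b, true)] ->
  ~ eig_support (line_rel e) (vstate R fab) (-2) ->
  (strongly_cospectral (line_rel (cartprod e K2)) (vstate R eps1) (vstate R eps2) <->
   (forall th th' : R, eig_support (line_rel e) (vstate R fab) th ->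
      eig_support (line_rel e) (vstate R fab) th' -> `|th - th'| != 2)) /\
  (strongly_cospectral (line_rel (cartprod e K2)) (vstate R eps1) (vstate R eps2) ->
   (forall th : R,
      Psi_minus (line_rel (cartprod e K2)) (vstate R eps1) (vstate R eps2) th <->
      eig_support (line_rel e) (vstate R fab) th) /\
   (forall th : R,
      Psi_plus (line_rel (cartprod e K2)) (vstate R eps1) (vstate R eps2) th <->
      ((exists th0, eig_support (line_rel e) (vstate R fab) th0 /\ th = th0 + 2)
       \/ th = -2))).
Proof.
move=> [_ e_irr] _ _ _ fabE eps1E eps2E no_m2.
have -> : eps1 = layer false fab by apply: val_inj; rewrite eps1E (layer_set2 _ fabE).
have -> : eps2 = layer true fab by apply: val_inj; rewrite eps2E (layer_set2 _ fabE).
have f_neq0 : vstate R fab <> (fun _ => 0).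
  by move/(congr1 (@^~ fab)); rewrite /vstate eqxx => /eqP; rewrite oner_eq0.
have Q_m2 := NNPP _ no_m2.
rewrite !vstate_layer; split; first exact: strongly_cospectral_layers.
move=> sc; split=> th; [exact: Psi_minus_layers | exact: Psi_plus_layers].
Qed.
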